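(* Call an edge $(u,v)$ of $G(n,r)$ long if $|uv|\ge\sqrt{\frac{8\ln n}{n}}$. Then w.h.p. none of the long edges of $G(n,r)$ is free (i.e. every long edge is crossed by some other edge of $G(n,r)$).
   Context: Here the $n$ points of $G(n,r)$ are chosen independently and uniformly at random on the unit torus (the unit square with wraparound); two points are joined by a straight-line edge iff their distance is at most $r=r(n)$. An edge of a geometric graph is free if its interior is not intersected by any other edge of the graph. ''W.h.p.'' means with probability tending to $1$ as $n\to\infty$. *)

From Stdlib Require Import Reals Lra.
Open Scope R_scope.

(** * Points on the unit torus [0,1)^2 *)
Definition point := (R * R)%type.

(** A configuration of points: only the first n entries are used. *)
Definition config := nat -> point.

(** Wrapped coordinate difference: the representative of [d] modulo 1
    lying in [-1/2, 1/2). *)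
Definition wrap (d : R) : R := d - IZR (up (d - /2)).

Definition tdisp (u v : point) : point :=
  (wrap (fst v - fst u), wrap (snd v - snd u)).

Definition tdist (u v : point) : R :=
  let d := tdisp u v in sqrt (fst d * fst d + snd d * snd d).

Definition tor_eq (a b : point) : Prop :=
  exists k l : Z, fst a - fst b = IZR k /\ snd a - snd b = IZR l.

(** The point at parameter t of the straight-line (geodesic) edge from u to v. *)
Definition seg_pt (u v : point) (t : R) : point :=
  (fst u + t * fst (tdisp u v), snd u + t * snd (tdisp u v)).

Definition is_edge (n : nat) (r : R) (p : config) (i j : nat) : Prop :=
  (i < n)%nat /\ (j < n)%nat /\ i <> j /\ tdist (p i) (p j) <= r.

Definition is_long (n : nat) (p : config) (i j : nat) : Prop :=
  tdist (p i) (p j) >= sqrt (8 * ln (INR n) / INR n).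

Definition crossed (n : nat) (r : R) (p : config) (i j : nat) : Prop :=
  exists k l : nat,
    is_edge n r p k l /\
    ~ ((k = i /\ l = j) \/ (k = j /\ l = i)) /\
    exists s t : R, 0 < s < 1 /\ 0 < t < 1 /\
      tor_eq (seg_pt (p i) (p j) s) (seg_pt (p k) (p l) t).

Definition free_edge (n : nat) (r : R) (p : config) (i j : nat) : Prop :=
  is_edge n r p i j /\ ~ crossed n r p i j.

Definition bad_event (n : nat) (r : R) (p : config) : Prop :=
  exists i j : nat, free_edge n r p i j /\ is_long n p i j.

(** * Lebesgue outer measure on the sample space [0,1)^(2n) *)
Definition in_cube (n : nat) (p : config) : Prop :=
  forall i, (i < n)%nat ->
    0 <= fst (p i) < 1 /\ 0 <= snd (p i) < 1.

Fixpoint prodR (n : nat) (f : nat -> R) : R :=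
  match n with
  | O => 1
  | S m => prodR m f * f m
  end.

Record box := mkBox { lo : config; hi : config }.

Definition box_ok (n : nat) (B : box) : Prop :=
  forall i, (i < n)%nat ->
    fst (lo B i) <= fst (hi B i) /\ snd (lo B i) <= snd (hi B i).

Definition box_vol (n : nat) (B : box) : R :=
  prodR n (fun i => (fst (hi B i) - fst (lo B i)) * (snd (hi B i) - snd (lo B i))).

Definition in_box (n : nat) (B : box) (p : config) : Prop :=
  forall i, (i < n)%nat ->
    fst (lo B i) <= fst (p i) <= fst (hi B i) /\
    snd (lo B i) <= snd (p i) <= snd (hi B i).

(** [outer_le n S eps]: the Lebesgue outer measure of S (a set of
    configurations of n points, only the first n coordinates matter) is at
    most eps, i.e. S is covered by countably many boxes of total volume <= eps. *)
Definition outer_le (n : nat) (S : config -> Prop) (eps : R) : Prop :=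
  exists Bs : nat -> box,
    (forall k, box_ok n (Bs k)) /\
    (forall p, S p -> exists k, in_box n (Bs k) p) /\
    (forall m, sum_f_R0 (fun k => box_vol n (Bs k)) m <= eps).

(** With n i.i.d. uniform points on the torus, the probability of the event E n
    tends to 0 (the events considered are measurable, so outer measure =
    probability). *)
Definition prob_tends_to_0 (E : nat -> config -> Prop) : Prop :=
  forall eps : R, eps > 0 -> exists N : nat, forall n : nat, (n >= N)%nat ->
    outer_le n (fun p => in_cube n p /\ E n p) eps.

Definition whp (P : nat -> config -> Prop) : Prop :=
  prob_tends_to_0 (fun n p => ~ P n p).

(* Cut the torus into an N x N grid of mesh about L/200, L = sqrt (8 ln n / n).
   Let uv be a free edge of length at least L and assume (exchanging the two
   coordinates otherwise) that its slope s lies in [-1, 1].  In coordinates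
   centred at the midpoint of uv and sheared along s, two windows of size
   about 0.46 L x 0.35 L above and below uv are such that a point of each
   would span an edge crossing uv; hence one window contains no point.  Each
   window contains a "staircase" of w x h grid cells, w ~ 0.46 L N and
   h ~ 0.33 L N, determined by a corner cell and by s rounded to a multiple
   of 1/100, so some of at most 2 * 201 * N^2 = O(n / ln n) staircases is
   empty.  A fixed staircase is empty with probability
   (1 - wh/N^2)^n <= exp (- 0.137 n L^2) = n^-1.096, and the union bound
   gives O(n^-0.096). *)

From Stdlib Require Import Reals Lra Lia Psatz ZArith List Classical.
Open Scope R_scope.

(** * Outer measure of sets of configurations *)

Definition box0 : box := mkBox (fun _ => (0, 0)) (fun _ => (0, 0)).

Definition boxes_vol (n : nat) (l : list box) : R :=
  fold_right (fun b acc => box_vol n b + acc) 0 l.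

Lemma prodR_ext n f g : (forall i, (i < n)%nat -> f i = g i) -> prodR n f = prodR n g.
Proof.
  induction n as [|n IH]; simpl; intros H; auto.
  rewrite IH by (intros; apply H; lia). rewrite H by lia. reflexivity.
Qed.

Lemma prodR_ge0 n f : (forall i, (i < n)%nat -> 0 <= f i) -> 0 <= prodR n f.
Proof.
  induction n as [|n IH]; simpl; intros H; [lra|].
  apply Rmult_le_pos; [apply IH; intros; apply H; lia | apply H; lia].
Qed.

Lemma box_vol_ge0 n b : box_ok n b -> 0 <= box_vol n b.
Proof.
  intros H. apply prodR_ge0. intros i Hi.
  destruct (H i Hi). apply Rmult_le_pos; lra.
Qed.

Lemma box0_vol n : (0 < n)%nat -> box_vol n box0 = 0.
Proof. destruct n; [lia|]. intros _. unfold box_vol. simpl. ring. Qed.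

Lemma box0_ok n : box_ok n box0.
Proof. intros i _; simpl; lra. Qed.

Lemma sum_f_R0_nth_le (l : list R) m :
  Forall (fun x => 0 <= x) l ->
  sum_f_R0 (fun k => nth k l 0) m <= fold_right Rplus 0 l.
Proof.
  revert m; induction l as [|a l IH]; intros m Hl.
  - simpl. induction m; simpl; lra.
  - pose proof (Forall_inv Hl) as Ha. pose proof (Forall_inv_tail Hl) as Hl'. simpl.
    assert (Hsum : 0 <= fold_right Rplus 0 l).
    { clear -Hl'. induction Hl'; simpl in *; lra. }
    destruct m as [|m]; [simpl; lra|].
    rewrite decomp_sum by lia. simpl. specialize (IH m Hl'). lra.
Qed.

(* The countable cover required by [outer_le] is the list padded with the
   null box [box0], which needs [0 < n]. *)
Lemma outer_le_of_boxes n (S : config -> Prop) l eps :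
  (0 < n)%nat -> Forall (box_ok n) l ->
  (forall p, S p -> exists b, In b l /\ in_box n b p) ->
  boxes_vol n l <= eps -> outer_le n S eps.
Proof.
  intros Hn Hok Hcov Hvol.
  exists (fun k => nth k l box0). split; [|split].
  - intros k. destruct (Nat.lt_ge_cases k (length l)).
    + rewrite Forall_forall in Hok. apply Hok, nth_In; auto.
    + rewrite nth_overflow by auto. apply box0_ok.
  - intros p Hp. destruct (Hcov p Hp) as [b [Hb Hpb]].
    destruct (In_nth l b box0 Hb) as [k [_ Hk]]. exists k. rewrite Hk. auto.
  - intros m.
    assert (Hnth : forall k, box_vol n (nth k l box0) = nth k (map (box_vol n) l) 0).
    { intros k. rewrite <- (box0_vol n Hn). symmetry. apply map_nth. }
    rewrite (sum_eq _ _ m (fun k _ => Hnth k)).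
    apply Rle_trans with (fold_right Rplus 0 (map (box_vol n) l)).
    + apply sum_f_R0_nth_le. rewrite Forall_forall in *. intros x Hx.
      apply in_map_iff in Hx. destruct Hx as [b [<- Hb]]. apply box_vol_ge0; auto.
    + replace (fold_right Rplus 0 (map (box_vol n) l)) with (boxes_vol n l); auto.
      clear. induction l; simpl; auto. rewrite IHl. reflexivity.
Qed.

Lemma outer_le_weaken n S e1 e2 : e1 <= e2 -> outer_le n S e1 -> outer_le n S e2.
Proof.
  intros He [Bs [Hok [Hcov Hvol]]]. exists Bs. split; [|split]; auto.
  intros m. specialize (Hvol m). lra.
Qed.

Definition rect := (point * point)%type.

Definition rect_area (c : rect) : R :=
  (fst (snd c) - fst (fst c)) * (snd (snd c) - snd (fst c)).

Definition rect_ok (c : rect) : Prop :=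
  fst (fst c) <= fst (snd c) /\ snd (fst c) <= snd (snd c).

Definition in_rect (c : rect) (x : point) : Prop :=
  fst (fst c) <= fst x <= fst (snd c) /\ snd (fst c) <= snd x <= snd (snd c).

Definition rects_area (l : list rect) : R :=
  fold_right (fun c acc => rect_area c + acc) 0 l.

Definition box_extend (m : nat) (b : box) (c : rect) : box :=
  mkBox (fun i => if Nat.eqb i m then fst c else lo b i)
        (fun i => if Nat.eqb i m then snd c else hi b i).

(* The boxes [c_0 x ... x c_(n-1)] with every [c_i] in [C]. *)
Fixpoint product_boxes (n : nat) (C : list rect) : list box :=
  match n with
  | O => box0 :: nil
  | S m => flat_map (fun b => map (box_extend m b) C) (product_boxes m C)
  end.

Lemma box_vol_extend m b c : box_vol (S m) (box_extend m b c) = box_vol m b * rect_area c.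
Proof.
  unfold box_vol. simpl. rewrite Nat.eqb_refl. f_equal.
  apply prodR_ext. intros i Hi. simpl.
  destruct (Nat.eqb_spec i m); [lia|reflexivity].
Qed.

Lemma boxes_vol_app n l1 l2 : boxes_vol n (l1 ++ l2) = boxes_vol n l1 + boxes_vol n l2.
Proof. induction l1; simpl; [lra|]. rewrite IHl1; ring. Qed.

Lemma boxes_vol_flat_map_const {A} n (f : A -> list box) l v :
  (forall x, In x l -> boxes_vol n (f x) = v) ->
  boxes_vol n (flat_map f l) = INR (length l) * v.
Proof.
  induction l as [|x l IH]; intros H; [simpl; ring|]. cbn [flat_map length].
  rewrite boxes_vol_app, IH by (intros; apply H; simpl; auto).
  rewrite H by (simpl; auto). rewrite S_INR. ring.
Qed.

Lemma boxes_vol_map_extend m b C :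
  boxes_vol (S m) (map (box_extend m b) C) = box_vol m b * rects_area C.
Proof. induction C; simpl; [ring|]. rewrite IHC, box_vol_extend. ring. Qed.

Lemma boxes_vol_product n C : boxes_vol n (product_boxes n C) = rects_area C ^ n.
Proof.
  induction n as [|n IH]; simpl.
  - unfold box_vol. simpl. ring.
  - rewrite <- IH. clear IH.
    induction (product_boxes n C) as [|b l IHl]; [simpl; ring|].
    cbn [flat_map]. rewrite boxes_vol_app, boxes_vol_map_extend, IHl. simpl. ring.
Qed.

Lemma product_boxes_ok n C : Forall rect_ok C -> Forall (box_ok n) (product_boxes n C).
Proof.
  rewrite !Forall_forall. intros HC. induction n as [|n IH]; simpl.
  - intros x [<-|[]]. apply box0_ok.
  - intros x Hx. apply in_flat_map in Hx. destruct Hx as [b [Hb Hx]].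
    apply in_map_iff in Hx. destruct Hx as [c [<- Hc]].
    intros i Hi. simpl. destruct (Nat.eqb_spec i n).
    + apply HC; auto.
    + apply IH; auto. lia.
Qed.

Lemma product_boxes_cover n C p :
  (forall i, (i < n)%nat -> exists c, In c C /\ in_rect c (p i)) ->
  exists b, In b (product_boxes n C) /\ in_box n b p.
Proof.
  induction n as [|n IH]; intros H.
  - exists box0. split; [simpl; auto|]. intros i Hi; lia.
  - destruct IH as [b [Hb Hpb]]. { intros i Hi; apply H; lia. }
    destruct (H n (Nat.lt_succ_diag_r n)) as [c [Hc Hpc]].
    exists (box_extend n b c). split.
    + apply in_flat_map. exists b. split; auto. apply in_map; auto.
    + intros i Hi. simpl. destruct (Nat.eqb_spec i n).
      * subst. exact Hpc.
      * apply Hpb. lia.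
Qed.

Definition swap_pt (x : point) : point := (snd x, fst x).
Definition swap_config (p : config) : config := fun i => swap_pt (p i).
Definition swap_box (b : box) : box :=
  mkBox (fun i => swap_pt (lo b i)) (fun i => swap_pt (hi b i)).

Lemma boxes_vol_swap n l : boxes_vol n (map swap_box l) = boxes_vol n l.
Proof.
  induction l as [|b l IH]; simpl; auto. rewrite IH. f_equal.
  apply prodR_ext. intros; simpl; ring.
Qed.

Lemma swap_box_ok n b : box_ok n b -> box_ok n (swap_box b).
Proof. intros H i Hi. destruct (H i Hi). simpl. auto. Qed.

Lemma in_box_swap n b p : in_box n b (swap_config p) -> in_box n (swap_box b) p.
Proof. intros H i Hi. destruct (H i Hi). simpl in *. auto. Qed.

Lemma in_cube_swap n p : in_cube n p -> in_cube n (swap_config p).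
Proof. intros H i Hi. destruct (H i Hi). simpl. auto. Qed.

(** * Grid cells and staircases *)

Definition cell (N a b : nat) : rect :=
  ((INR a / INR N, INR b / INR N), (INR (S a) / INR N, INR (S b) / INR N)).

Definition cell_index (N : nat) (x : R) : nat := Z.to_nat (Int_part (x * INR N)).

(* The staircase with corner column [a0] and column offsets [rho]: its
   column [a0 + c] (mod N), [c < w], consists of the [h] cells starting at
   row [rho c] (mod N). *)
Definition in_staircase (N w h a0 : nat) (rho : nat -> nat) (a b : nat) : Prop :=
  let c := ((a + N - a0) mod N)%nat in (c < w)%nat /\ ((b + N - rho c) mod N < h)%nat.

Definition cells_off_staircase (N w h a0 : nat) (rho : nat -> nat) : list rect :=
  flat_map (fun c => map (fun e => cell N ((a0 + c) mod N)
                                     (if c <? w then (rho c + e) mod N else e))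
                         (if c <? w then seq h (N - h) else seq 0 N)) (seq 0 N).

Lemma rects_area_const l v : (forall c, In c l -> rect_area c = v) ->
  rects_area l = INR (length l) * v.
Proof.
  induction l as [|c l IH]; intros H; simpl; [ring|].
  rewrite IH by (intros; apply H; simpl; auto). rewrite H by (simpl; auto).
  destruct (length l); simpl; ring.
Qed.

Lemma cell_area N a b : (0 < N)%nat -> rect_area (cell N a b) = / (INR N * INR N).
Proof.
  intros HN. unfold rect_area, cell; cbn [fst snd]. rewrite !S_INR.
  assert (0 < INR N) by (apply lt_0_INR; auto). field. lra.
Qed.

Lemma cell_ok N a b : (0 < N)%nat -> rect_ok (cell N a b).
Proof.
  intros HN. unfold rect_ok, cell; cbn [fst snd]. rewrite !S_INR.
  assert (0 < INR N) by (apply lt_0_INR; auto).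
  split; apply Rmult_le_compat_r; try (left; apply Rinv_0_lt_compat); lra.
Qed.

Lemma length_flat_map_const {A B} (f : A -> list B) l k :
  (forall x, In x l -> length (f x) = k) -> length (flat_map f l) = (length l * k)%nat.
Proof.
  induction l as [|x l IH]; intros H; simpl; auto.
  rewrite length_app, IH by (intros; apply H; simpl; auto). rewrite H by (simpl; auto). lia.
Qed.

Lemma cells_off_staircase_length N w h a0 rho : (w <= N)%nat -> (h <= N)%nat ->
  length (cells_off_staircase N w h a0 rho) = (w * (N - h) + (N - w) * N)%nat.
Proof.
  intros Hw Hh. unfold cells_off_staircase.
  replace (seq 0 N) with (seq 0 w ++ seq w (N - w))
    by (rewrite <- seq_app; f_equal; lia).
  rewrite flat_map_app, length_app.
  rewrite (length_flat_map_const _ _ (N - h)).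
  2:{ intros x Hx. apply in_seq in Hx. rewrite length_map.
      destruct (Nat.ltb_spec x w); [apply length_seq | lia]. }
  rewrite (length_flat_map_const _ _ N).
  2:{ intros x Hx. apply in_seq in Hx. rewrite length_map.
      destruct (Nat.ltb_spec x w); [lia|]. rewrite length_app, !length_seq. lia. }
  rewrite !length_seq. lia.
Qed.

Lemma cells_off_staircase_area N w h a0 rho : (0 < N)%nat -> (w <= N)%nat -> (h <= N)%nat ->
  rects_area (cells_off_staircase N w h a0 rho) = 1 - INR w * INR h / (INR N * INR N).
Proof.
  intros HN Hw Hh. rewrite (rects_area_const _ (/ (INR N * INR N))).
  - rewrite cells_off_staircase_length by auto.
    assert (0 < INR N) by (apply lt_0_INR; auto).
    rewrite plus_INR, !mult_INR, !minus_INR by auto. field. lra.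
  - intros c Hc. apply in_flat_map in Hc. destruct Hc as [x [_ Hc]].
    apply in_map_iff in Hc. destruct Hc as [e [<- _]]. apply cell_area; auto.
Qed.

Lemma cells_off_staircase_ok N w h a0 rho : (0 < N)%nat ->
  Forall rect_ok (cells_off_staircase N w h a0 rho).
Proof.
  intros HN. rewrite Forall_forall. intros c Hc. apply in_flat_map in Hc.
  destruct Hc as [x [_ Hc]]. apply in_map_iff in Hc. destruct Hc as [e [<- _]].
  apply cell_ok; auto.
Qed.

Lemma cell_index_spec N x : (0 < N)%nat -> 0 <= x < 1 ->
  (cell_index N x < N)%nat /\
  INR (cell_index N x) / INR N <= x <= INR (S (cell_index N x)) / INR N.
Proof.
  intros HN Hx. assert (0 < INR N) by (apply lt_0_INR; auto).
  unfold cell_index. destruct (base_Int_part (x * INR N)) as [H1 H2].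
  assert (0 <= x * INR N) by (apply Rmult_le_pos; lra).
  assert (x * INR N < INR N) by (rewrite <- (Rmult_1_l (INR N)) at 2; apply Rmult_lt_compat_r; lra).
  set (z := Int_part (x * INR N)) in *.
  assert (Hz0 : (0 <= z)%Z) by (assert (-1 < z)%Z by (apply lt_IZR; simpl; lra); lia).
  assert (Hz : INR (Z.to_nat z) = IZR z) by (rewrite INR_IZR_INZ, Z2Nat.id; auto).
  rewrite S_INR, Hz. split; [apply INR_lt; rewrite Hz; lra|].
  split; apply (Rmult_le_reg_r (INR N)); auto; unfold Rdiv;
    rewrite Rmult_assoc, Rinv_l; lra.
Qed.

Lemma mod_sub_add_cancel a a0 N : (a < N)%nat -> (a0 < N)%nat ->
  ((a0 + (a + N - a0) mod N) mod N = a)%nat.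
Proof.
  intros Ha Ha0. rewrite Nat.Div0.add_mod_idemp_r.
  replace (a0 + (a + N - a0))%nat with (a + 1 * N)%nat by lia.
  rewrite Nat.Div0.mod_add. apply Nat.mod_small; auto.
Qed.

Lemma cells_off_staircase_cover N w h a0 rho x :
  (0 < N)%nat -> (a0 < N)%nat -> (forall c, (rho c < N)%nat) ->
  0 <= fst x < 1 -> 0 <= snd x < 1 ->
  ~ in_staircase N w h a0 rho (cell_index N (fst x)) (cell_index N (snd x)) ->
  exists c, In c (cells_off_staircase N w h a0 rho) /\ in_rect c x.
Proof.
  intros HN Ha0 Hrho Hx1 Hx2 Hout.
  destruct (cell_index_spec N (fst x) HN Hx1) as [Ha Hxa].
  destruct (cell_index_spec N (snd x) HN Hx2) as [Hb Hxb].
  set (a := cell_index N (fst x)) in *. set (b := cell_index N (snd x)) in *.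
  set (c := ((a + N - a0) mod N)%nat).
  assert (Hc : (c < N)%nat) by (apply Nat.mod_upper_bound; lia).
  assert (Hca : ((a0 + c) mod N)%nat = a) by (apply mod_sub_add_cancel; auto).
  exists (cell N a b). split; [|unfold in_rect, cell; cbn [fst snd]; lra].
  apply in_flat_map. exists c. split; [apply in_seq; lia|].
  apply in_map_iff. rewrite Hca.
  destruct (Nat.ltb_spec c w) as [Hcw|Hcw].
  - set (e := ((b + N - rho c) mod N)%nat).
    assert (He : (e < N)%nat) by (apply Nat.mod_upper_bound; lia).
    assert (Heh : (h <= e)%nat).
    { destruct (Nat.lt_ge_cases e h); auto. exfalso. apply Hout. split; auto. }
    exists e. split; [f_equal; apply mod_sub_add_cancel; auto | apply in_seq; lia].
  - exists b. split; [reflexivity | apply in_seq; lia].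
Qed.

(** * Geometry of edges on the torus *)

Lemma wrap_id d : -/2 <= d < /2 -> wrap d = d.
Proof. intros H. unfold wrap. rewrite <- (tech_up (d - /2) 0); simpl; lra. Qed.

Lemma wrap_shift d k : wrap (d + IZR k) = wrap d.
Proof.
  unfold wrap. destruct (archimed (d - /2)) as [H1 H2].
  rewrite <- (tech_up (d + IZR k - /2) (up (d - /2) + k)); rewrite plus_IZR; [ring|lra|lra].
Qed.

Lemma wrap_range d : -/2 <= wrap d < /2.
Proof. unfold wrap. destruct (archimed (d - /2)). lra. Qed.

Lemma wrap_eq d : exists k, wrap d = d + IZR k.
Proof. exists (- up (d - /2))%Z. unfold wrap. rewrite opp_IZR. ring. Qed.

Lemma Rabs_le_bounds x a : Rabs x <= a -> - a <= x <= a.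
Proof. unfold Rabs; destruct Rcase_abs; lra. Qed.

Lemma IZR_bounds_eq0 z : -1 < IZR z < 1 -> z = 0%Z.
Proof. intros [H1 H2]. apply lt_IZR in H1. apply lt_IZR in H2. lia. Qed.

Lemma tdisp_of_shift a b (zx zy : Z) :
  -/2 <= fst b - fst a + IZR zx < /2 -> -/2 <= snd b - snd a + IZR zy < /2 ->
  tdisp a b = (fst b - fst a + IZR zx, snd b - snd a + IZR zy).
Proof.
  intros Hx Hy. unfold tdisp.
  rewrite <- (wrap_shift (fst b - fst a) zx), <- (wrap_shift (snd b - snd a) zy).
  rewrite (wrap_id _ Hx), (wrap_id _ Hy).
  reflexivity.
Qed.

Lemma tdisp_self a : tdisp a a = (0, 0).
Proof. unfold tdisp. rewrite !Rminus_diag, wrap_id by lra. reflexivity. Qed.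

Lemma tdisp_swap a b : tdisp (swap_pt a) (swap_pt b) = swap_pt (tdisp a b).
Proof. reflexivity. Qed.

Lemma tdist_swap a b : tdist (swap_pt a) (swap_pt b) = tdist a b.
Proof. unfold tdist. rewrite tdisp_swap. simpl. f_equal. ring. Qed.

Lemma is_edge_swap n r p k l : is_edge n r (swap_config p) k l <-> is_edge n r p k l.
Proof. unfold is_edge, swap_config. rewrite tdist_swap. tauto. Qed.

Lemma crossed_swap n r p i j : crossed n r (swap_config p) i j -> crossed n r p i j.
Proof.
  intros [k [l [He [Hne [s [t [Hs [Ht [z1 [z2 [E1 E2]]]]]]]]]]].
  exists k, l. split; [apply is_edge_swap; auto|]. split; auto.
  exists s, t. split; auto. split; auto. exists z2, z1.
  unfold seg_pt, swap_config in *. rewrite !tdisp_swap in *. simpl in *. auto.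
Qed.

Lemma free_edge_swap n r p i j : free_edge n r p i j -> free_edge n r (swap_config p) i j.
Proof.
  intros [He Hc]. split; [apply is_edge_swap; auto|].
  intros H. apply Hc. apply crossed_swap; auto.
Qed.

Lemma dominant_coordinate L d1 d2 : 0 < L -> L ^ 2 <= d1 ^ 2 + d2 ^ 2 -> d2 ^ 2 <= d1 ^ 2 ->
  d1 <> 0 /\ -1 <= d2 / d1 <= 1 /\ 68/100 * L < Rabs d1.
Proof.
  intros HL Hd Hd21.
  assert (Hd1 : d1 <> 0) by (intro E; rewrite E in *; nra).
  assert (Habs : 0 < Rabs d1) by (apply Rabs_pos_lt; auto).
  split; [auto|split].
  - assert ((d2 / d1) ^ 2 <= 1); [|nra].
    unfold Rdiv. rewrite Rpow_mult_distr, pow_inv.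
    apply (Rmult_le_reg_r (d1 ^ 2)); [nra|].
    rewrite Rmult_assoc, Rinv_l by (apply pow_nonzero; auto). lra.
  - apply Rsqr_incrst_0; [| lra | apply Rabs_pos].
    rewrite <- Rsqr_abs. unfold Rsqr. nra.
Qed.

(* In coordinates centred at the midpoint of a long edge and sheared along
   its slope [s], the windows are the sets [-al L <= X <= be L, L/100 <= Z <= 36L/100]
   above the edge and [-be L <= X <= al L, -36L/100 <= Z <= -L/100] below it.
   They are skewed against the slope so that any two points taken from the
   two windows are joined by an edge. *)
Definition skewed_windows (s al be : R) : Prop :=
  (0 <= s /\ al = 34/100 /\ be = 12/100) \/ (s < 0 /\ al = 12/100 /\ be = 34/100).

Lemma window_gap_nonneg_slope s L X1 X2 Z1 Z2 :
  0 < L -> 0 <= s <= 1 ->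
  - 34/100 * L <= X1 <= 12/100 * L -> 1/100 * L <= Z1 <= 36/100 * L ->
  - 12/100 * L <= X2 <= 34/100 * L -> - 36/100 * L <= Z2 <= - 1/100 * L ->
  (X1 - X2) ^ 2 + ((Z1 - Z2) + s * (X1 - X2)) ^ 2 <= 99/100 * L ^ 2.
Proof.
  intros HL Hs HX1 HZ1 HX2 HZ2.
  set (dx := X1 - X2). set (dz := Z1 - Z2).
  assert (Hdz : 2/100 * L <= dz <= 72/100 * L) by (unfold dz; lra).
  assert (Hdx : - 68/100 * L <= dx <= 24/100 * L) by (unfold dx; lra).
  destruct (Rle_or_lt 0 dx) as [Hdx0|Hdx0].
  - assert (0 <= s * dx <= dx) by (split; nra).
    assert (dx ^ 2 <= (24/100 * L) ^ 2) by (apply pow_incr; lra).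
    assert ((dz + s * dx) ^ 2 <= (96/100 * L) ^ 2) by (apply pow_incr; lra).
    nra.
  - assert (dx <= s * dx <= 0) by (split; nra).
    assert (dx ^ 2 <= (68/100 * L) ^ 2)
      by (rewrite <- (pow2_abs dx); apply pow_incr; split; [apply Rabs_pos|apply Rabs_le; lra]).
    assert ((dz + s * dx) ^ 2 <= (72/100 * L) ^ 2)
      by (rewrite <- (pow2_abs (dz + s * dx)); apply pow_incr;
          split; [apply Rabs_pos|apply Rabs_le; lra]).
    nra.
Qed.

Lemma window_gap s L X1 X2 Z1 Z2 al be :
  0 < L -> -1 <= s <= 1 -> skewed_windows s al be ->
  - al * L <= X1 <= be * L -> 1/100 * L <= Z1 <= 36/100 * L ->
  - be * L <= X2 <= al * L -> - 36/100 * L <= Z2 <= - 1/100 * L ->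
  (X1 - X2) ^ 2 + ((Z1 - Z2) + s * (X1 - X2)) ^ 2 <= 99/100 * L ^ 2.
Proof.
  intros HL Hs [[Hs0 [-> ->]] | [Hs0 [-> ->]]] HX1 HZ1 HX2 HZ2.
  - apply window_gap_nonneg_slope; auto; lra.
  - (* reflect the picture in the vertical axis *)
    replace ((X1 - X2) ^ 2 + ((Z1 - Z2) + s * (X1 - X2)) ^ 2)
      with ((- X1 - - X2) ^ 2 + ((Z1 - Z2) + (- s) * (- X1 - - X2)) ^ 2) by ring.
    apply window_gap_nonneg_slope; auto; lra.
Qed.

(* Up to integer translation an endpoint lies on the line [Z = 0], while the
   windows keep away from it. *)
Lemma endpoint_outside_window L d1 d2 s t zx zy X Z :
  0 < L <= 1/100 -> Rabs d1 <= /2 -> s * d1 = d2 -> (t = 0 \/ t = 1) ->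
  X = (t - /2) * d1 + IZR zx ->
  Z = (t - /2) * d2 + IZR zy - s * X ->
  Rabs X <= 34/100 * L -> 1/100 * L <= Rabs Z <= 36/100 * L -> False.
Proof.
  intros HL Hd1 Hs Ht HX HZ HXb HZb.
  assert (Hhalf : Rabs ((t - /2) * d1) <= /4).
  { rewrite Rabs_mult.
    replace (Rabs (t - /2)) with (/2)
      by (destruct Ht as [-> | ->]; [rewrite Rabs_left | rewrite Rabs_right]; lra).
    lra. }
  assert (zx = 0%Z) as ->.
  { apply IZR_bounds_eq0. apply Rabs_le_bounds in Hhalf. apply Rabs_le_bounds in HXb. lra. }
  simpl in HX.
  assert (HZ' : Z = IZR zy) by (rewrite HZ, HX; nra).
  assert (zy = 0%Z) as ->.
  { apply IZR_bounds_eq0. rewrite <- HZ'. destruct HZb as [_ HZb]. apply Rabs_le_bounds in HZb. lra. }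
  rewrite HZ', Rabs_R0 in HZb. lra.
Qed.

Lemma segment_meets_axis X1 X2 Z1 Z2 a :
  Rabs X1 <= a -> Rabs X2 <= a -> 0 < Z1 -> Z2 < 0 ->
  exists t, 0 < t < 1 /\ Z1 + t * (Z2 - Z1) = 0 /\ Rabs (X1 + t * (X2 - X1)) <= a.
Proof.
  intros HX1 HX2 HZ1 HZ2. apply Rabs_le_bounds in HX1, HX2.
  exists (Z1 / (Z1 - Z2)).
  assert (Ht : 0 < Z1 / (Z1 - Z2) < 1).
  { split; [apply Rdiv_lt_0_compat; lra|].
    apply (Rmult_lt_reg_r (Z1 - Z2)); [lra|].
    unfold Rdiv. rewrite Rmult_assoc, Rinv_l by lra. lra. }
  split; [exact Ht|split; [field; lra|]]. apply Rabs_le. split; nra.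
Qed.

Lemma endpoints_outside_window u v q (zx zy : Z) L :
  0 < L <= 1/100 -> fst (tdisp u v) <> 0 -> (q = u \/ q = v) ->
  let d1 := fst (tdisp u v) in let d2 := snd (tdisp u v) in
  let s := d2 / d1 in
  let X := fst q + IZR zx - (fst u + d1 / 2) in
  let Z := snd q + IZR zy - (snd u + d2 / 2) - s * X in
  Rabs X <= 34/100 * L -> 1/100 * L <= Rabs Z <= 36/100 * L -> False.
Proof.
  intros HL Hd1 Hq d1 d2 s X Z HX HZ.
  assert (Hsd : s * d1 = d2) by (unfold s; field; auto).
  assert (Hd1b : Rabs d1 <= /2) by (apply Rabs_le; destruct (wrap_range (fst v - fst u)); unfold d1; simpl; lra).
  destruct Hq as [-> | ->].
  - apply (endpoint_outside_window L d1 d2 s 0 zx zy X Z HL Hd1b Hsd (or_introl eq_refl)); auto.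
    + unfold X. field.
    + unfold Z. field.
  - destruct (wrap_eq (fst v - fst u)) as [q1 Hq1].
    destruct (wrap_eq (snd v - snd u)) as [q2 Hq2].
    assert (Hd1e : d1 = fst v - fst u + IZR q1) by exact Hq1.
    assert (Hd2e : d2 = snd v - snd u + IZR q2) by exact Hq2.
    apply (endpoint_outside_window L d1 d2 s 1 (zx - q1) (zy - q2) X Z HL Hd1b Hsd (or_intror eq_refl)); auto.
    + unfold X. rewrite minus_IZR, Hd1e. field.
    + unfold Z. rewrite minus_IZR, Hd2e. field.
Qed.

(* A point [k] in the upper window and a point [l] in the lower one span an
   edge of length at most [sqrt(0.99) L <= |ij|], and the segment [kl] crosses
   the line [Z = 0] at [|X| <= 0.34 L < |d1|/2], i.e. inside the segment [ij]. *)
Lemma crossed_of_window_points n r p i j k l (z1x z1y z2x z2y : Z) L al be :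
  is_edge n r p i j -> (k < n)%nat -> (l < n)%nat -> 0 < L <= 1/100 ->
  let d1 := fst (tdisp (p i) (p j)) in let d2 := snd (tdisp (p i) (p j)) in
  L ^ 2 <= d1 ^ 2 + d2 ^ 2 -> d2 ^ 2 <= d1 ^ 2 ->
  let s := d2 / d1 in
  let M1 := fst (p i) + d1 / 2 in let M2 := snd (p i) + d2 / 2 in
  let X1 := fst (p k) + IZR z1x - M1 in let Z1 := snd (p k) + IZR z1y - M2 - s * X1 in
  let X2 := fst (p l) + IZR z2x - M1 in let Z2 := snd (p l) + IZR z2y - M2 - s * X2 in
  skewed_windows s al be ->
  - al * L <= X1 <= be * L -> 1/100 * L <= Z1 <= 36/100 * L ->
  - be * L <= X2 <= al * L -> - 36/100 * L <= Z2 <= - 1/100 * L ->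
  crossed n r p i j.
Proof.
  intros [Hi [Hj [Hij Hr]]] Hk Hl HL d1 d2 HLd Hd21 s M1 M2 X1 Z1 X2 Z2 Hsk HX1 HZ1 HX2 HZ2.
  destruct (dominant_coordinate L d1 d2) as [Hd1 [Hs Hd1L]]; [lra|auto|auto|].
  fold s in Hs.
  assert (Hwin : al <= 34/100 /\ be <= 34/100) by (destruct Hsk; lra).
  set (Dx := X2 - X1). set (Dy := (Z2 + s * X2) - (Z1 + s * X1)).
  assert (HD : Dx ^ 2 + Dy ^ 2 <= 99/100 * L ^ 2).
  { replace (Dx ^ 2 + Dy ^ 2) with ((X1 - X2) ^ 2 + ((Z1 - Z2) + s * (X1 - X2)) ^ 2)
      by (unfold Dx, Dy; ring).
    eapply window_gap; eauto; lra. }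
  assert (Htd : tdisp (p k) (p l) = (Dx, Dy)).
  { assert (Ex : fst (p l) - fst (p k) + IZR (z2x - z1x) = Dx)
      by (rewrite minus_IZR; unfold Dx, X1, X2; ring).
    assert (Ey : snd (p l) - snd (p k) + IZR (z2y - z1y) = Dy)
      by (rewrite minus_IZR; unfold Dy, Z1, Z2, X1, X2; ring).
    rewrite (tdisp_of_shift _ _ (z2x - z1x) (z2y - z1y)); rewrite ?Ex, ?Ey; auto; nra. }
  assert (HX1b : Rabs X1 <= 34/100 * L) by (apply Rabs_le; nra).
  assert (HX2b : Rabs X2 <= 34/100 * L) by (apply Rabs_le; nra).
  destruct (segment_meets_axis X1 X2 Z1 Z2 (34/100 * L)) as [t [Ht [HZt HXt]]]; auto; try lra.
  set (XP := X1 + t * (X2 - X1)) in HXt.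
  assert (Hsig : 0 < /2 + XP / d1 < 1).
  { assert (Habs : Rabs (XP / d1) < /2).
    { unfold Rdiv. rewrite Rabs_mult, Rabs_inv.
      apply (Rmult_lt_reg_r (Rabs d1)); [lra|].
      rewrite Rmult_assoc, Rinv_l by lra. lra. }
    apply Rabs_def2 in Habs. lra. }
  exists k, l. split; [|split].
  - repeat split; auto.
    + intros <-. rewrite tdisp_self in Htd. injection Htd as HDx HDy.
      unfold Dx, Dy in *. nra.
    + unfold tdist. rewrite Htd. cbn [fst snd]. apply Rle_trans with (tdist (p i) (p j)); auto.
      unfold tdist. apply sqrt_le_1_alt. fold d1 d2. nra.
  - intros [[-> _] | [-> _]].
    + apply (endpoints_outside_window (p i) (p j) (p i) z1x z1y L); auto.
      fold d1 d2 s. fold M1 M2 X1 Z1. rewrite Rabs_right by lra. lra.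
    + apply (endpoints_outside_window (p i) (p j) (p j) z1x z1y L); auto.
      fold d1 d2 s. fold M1 M2 X1 Z1. rewrite Rabs_right by lra. lra.
  - exists (/2 + XP / d1), t. repeat split; try lra.
    exists z1x, z1y. unfold seg_pt. rewrite Htd. cbn [fst snd]. fold d1 d2. split.
    + unfold XP, Dx, X1, M1. field. auto.
    + replace ((/2 + XP / d1) * d2) with (d2 / 2 + s * XP) by (unfold s; field; auto).
      unfold XP, Dy, Z1, Z2, X1, X2, M2 in *. nra.
Qed.

(** * A free long edge leaves a staircase empty *)

Lemma Int_part_bounds x : IZR (Int_part x) <= x < IZR (Int_part x) + 1.
Proof. destruct (base_Int_part x). lra. Qed.

Lemma next_grid_point g v : 0 < g ->
  v < IZR (Int_part (v / g) + 1) * g <= v + g.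
Proof.
  intros Hg. set (q := v / g). assert (Hv : v = q * g) by (unfold q; field; lra).
  destruct (Int_part_bounds q) as [H1 H2].
  rewrite plus_IZR, Hv. simpl (IZR 1). split; nra.
Qed.

Definition slope_grid (jn : nat) : R := (INR jn - 100) / 100.

Lemma slope_grid_below s : -1 <= s <= 1 ->
  exists jn, (jn <= 200)%nat /\ s - 1/100 < slope_grid jn <= s.
Proof.
  intros Hs. set (jj := Int_part (s * 100)).
  destruct (Int_part_bounds (s * 100)) as [Hj1 Hj2]. fold jj in Hj1, Hj2.
  assert (Hjj : (-100 <= jj <= 100)%Z).
  { split; [assert (-101 < jj)%Z by (apply lt_IZR; simpl; lra); lia
           | apply le_IZR; simpl; lra]. }
  exists (Z.to_nat (jj + 100)). split; [lia|].
  unfold slope_grid. rewrite INR_IZR_INZ, Z2Nat.id, plus_IZR by lia. simpl. lra.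
Qed.

(* Row of the first cell in column [c] of the staircase with corner row [b0]
   and slope [slope_grid jn]. *)
Definition stair_offset (N b0 jn : nat) (c : nat) : nat :=
  Z.to_nat ((Z.of_nat b0 + Int_part (slope_grid jn * INR c)) mod Z.of_nat N).

Lemma stair_offset_lt N b0 jn c : (0 < N)%nat -> (stair_offset N b0 jn c < N)%nat.
Proof.
  intros HN. unfold stair_offset.
  destruct (Z.mod_pos_bound (Z.of_nat b0 + Int_part (slope_grid jn * INR c)) (Z.of_nat N)); lia.
Qed.

(* A point in column [c] and row [e]
   of the staircase lifted to the corner [(A0, B0)] lies in the window
   [xl <= X <= xl + (w+1) g] and, because the quantised slope [sg] errs by
   less than 1/100, in the sheared band [zb - L/100 - 2g <= Z <= zb + (h+2) g]. *)
Lemma staircase_cell_in_window (g L s sg M1 M2 xl zb x y : R) (w h c e : nat) (A0 B0 : Z) :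
  0 < g -> 0 < L -> -1 <= s <= 1 -> s - 1/100 < sg <= s ->
  (INR w + 1) * g <= L -> (c < w)%nat -> (e < h)%nat ->
  A0 = (Int_part ((M1 + xl) / g) + 1)%Z ->
  B0 = (Int_part ((M2 + s * (IZR A0 * g - M1) + zb) / g) + 1)%Z ->
  (IZR A0 + INR c) * g <= x <= (IZR A0 + INR c + 1) * g ->
  (IZR B0 + IZR (Int_part (sg * INR c)) + INR e) * g <= y <=
     (IZR B0 + IZR (Int_part (sg * INR c)) + INR e + 1) * g ->
  xl <= x - M1 <= xl + (INR w + 1) * g /\
  zb - L / 100 - 2 * g <= y - M2 - s * (x - M1) <= zb + (INR h + 2) * g.
Proof.
  intros Hg HL Hs Hsg Hw Hc He HA HB Hx Hy.
  pose proof (next_grid_point g (M1 + xl) Hg) as HA'. rewrite <- HA in HA'.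
  set (X0 := IZR A0 * g - M1) in *.
  pose proof (next_grid_point g (M2 + s * X0 + zb) Hg) as HB'. rewrite <- HB in HB'.
  destruct (Int_part_bounds (sg * INR c)) as [Hi1 Hi2].
  set (I := IZR (Int_part (sg * INR c))) in *.
  assert (Hcw : INR c + 1 <= INR w) by (rewrite <- S_INR; apply le_INR; lia).
  assert (Heh : INR e + 1 <= INR h) by (rewrite <- S_INR; apply le_INR; lia).
  assert (Hc0 : 0 <= INR c) by apply pos_INR.
  assert (He0 : 0 <= INR e) by apply pos_INR.
  set (th := x - M1 - X0 - INR c * g).
  assert (Hth : 0 <= th <= g) by (unfold th, X0; nra).
  assert (Hsth : - g <= s * th <= g) by nra.
  assert (Hcg : 0 <= INR c * g <= L) by nra.
  assert (Hsc : - (1/100) * L <= (sg - s) * (INR c * g) <= 0) by nra.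
  split; [unfold X0 in *; nra|].
  replace (y - M2 - s * (x - M1)) with (y - M2 - s * X0 - s * (INR c * g) - s * th)
    by (unfold th; ring).
  assert (Hy1 : (IZR B0 + sg * INR c - 1 + INR e) * g <= y) by nra.
  assert (Hy2 : y <= (IZR B0 + sg * INR c + INR e + 1) * g) by nra.
  split; nra.
Qed.

Lemma Z_to_nat_mod N A : (0 < N)%nat ->
  Z.of_nat (Z.to_nat (A mod Z.of_nat N)) = (A - Z.of_nat N * (A / Z.of_nat N))%Z.
Proof.
  intros HN. destruct (Z.mod_pos_bound A (Z.of_nat N)); [lia|].
  rewrite Z2Nat.id by lia. pose proof (Z.div_mod A (Z.of_nat N)). lia.
Qed.

Lemma cell_shift N a x z : (0 < N)%nat ->
  INR a / INR N <= x <= INR (S a) / INR N ->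
  IZR (Z.of_nat a + Z.of_nat N * z) / INR N <= x + IZR z
    <= (IZR (Z.of_nat a + Z.of_nat N * z) + 1) / INR N.
Proof.
  intros HN H. assert (0 < INR N) by (apply lt_0_INR; auto).
  rewrite plus_IZR, mult_IZR, <- !INR_IZR_INZ. rewrite S_INR in H.
  replace ((INR a + INR N * IZR z) / INR N) with (INR a / INR N + IZR z) by (field; lra).
  replace ((INR a + INR N * IZR z + 1) / INR N) with ((INR a + 1) / INR N + IZR z) by (field; lra).
  lra.
Qed.

(* A staircase is described modulo [N]; a point in one of its cells has an
   integer translate in the corresponding cell of any lift [(A0, B0)] of
   its corner to the plane. *)
Lemma staircase_lift N w h (A0 B0 : Z) jn a b x y :
  (0 < N)%nat -> (a < N)%nat -> (b < N)%nat ->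
  INR a / INR N <= x <= INR (S a) / INR N ->
  INR b / INR N <= y <= INR (S b) / INR N ->
  in_staircase N w h (Z.to_nat (A0 mod Z.of_nat N))
    (stair_offset N (Z.to_nat (B0 mod Z.of_nat N)) jn) a b ->
  exists c e zx zy, (c < w)%nat /\ (e < h)%nat /\
    (IZR A0 + INR c) / INR N <= x + IZR zx <= (IZR A0 + INR c + 1) / INR N /\
    (IZR B0 + IZR (Int_part (slope_grid jn * INR c)) + INR e) / INR N <= y + IZR zy <=
    (IZR B0 + IZR (Int_part (slope_grid jn * INR c)) + INR e + 1) / INR N.
Proof.
  intros HN Ha Hb Hx Hy [Hc He].
  set (a0 := Z.to_nat (A0 mod Z.of_nat N)) in *.
  set (b0 := Z.to_nat (B0 mod Z.of_nat N)) in *.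
  set (c := ((a + N - a0) mod N)%nat) in *.
  set (rc := stair_offset N b0 jn c) in *.
  set (e := ((b + N - rc) mod N)%nat) in *.
  assert (Ha0 : Z.of_nat a0 = (A0 - Z.of_nat N * (A0 / Z.of_nat N))%Z) by (apply Z_to_nat_mod; auto).
  assert (Hb0 : Z.of_nat b0 = (B0 - Z.of_nat N * (B0 / Z.of_nat N))%Z) by (apply Z_to_nat_mod; auto).
  assert (Ha0N : (a0 < N)%nat) by (unfold a0; destruct (Z.mod_pos_bound A0 (Z.of_nat N)); lia).
  assert (Hrc : (rc < N)%nat) by (apply stair_offset_lt; auto).
  pose proof (Nat.div_mod_eq (a + N - a0) N) as Ec. fold c in Ec.
  pose proof (Nat.div_mod_eq (b + N - rc) N) as Ee. fold e in Ee.
  set (I := Int_part (slope_grid jn * INR c)).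
  assert (Er : Z.of_nat rc = (Z.of_nat b0 + I - Z.of_nat N * ((Z.of_nat b0 + I) / Z.of_nat N))%Z)
    by (apply Z_to_nat_mod; auto).
  exists c, e,
    (A0 / Z.of_nat N + 1 - Z.of_nat ((a + N - a0) / N))%Z,
    (B0 / Z.of_nat N + 1 + (Z.of_nat b0 + I) / Z.of_nat N - Z.of_nat ((b + N - rc) / N))%Z.
  split; [auto|split; [auto|split]].
  - replace (IZR A0 + INR c) with
      (IZR (Z.of_nat a + Z.of_nat N * (A0 / Z.of_nat N + 1 - Z.of_nat ((a + N - a0) / N))))
      by (rewrite INR_IZR_INZ, <- plus_IZR; f_equal; lia).
    apply cell_shift; auto.
  - fold I. replace (IZR B0 + IZR I + INR e) with
      (IZR (Z.of_nat b + Z.of_nat N * (B0 / Z.of_nat N + 1 + (Z.of_nat b0 + I) / Z.of_nat N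
         - Z.of_nat ((b + N - rc) / N))))
      by (rewrite INR_IZR_INZ, <- !plus_IZR; f_equal; lia).
    apply cell_shift; auto.
Qed.

Definition staircase_empty (n N w h : nat) (p : config) (a0 b0 jn : nat) : Prop :=
  forall k, (k < n)%nat ->
    ~ in_staircase N w h a0 (stair_offset N b0 jn) (cell_index N (fst (p k))) (cell_index N (snd (p k))).

Definition some_staircase_empty (n N w h : nat) (p : config) : Prop :=
  exists a0 b0 jn, (a0 < N)%nat /\ (b0 < N)%nat /\ (jn <= 200)%nat /\
    staircase_empty n N w h p a0 b0 jn.

Lemma staircase_point_in_window n N w h p k (A0 B0 : Z) jn L s M1 M2 xl zb :
  (0 < N)%nat -> in_cube n p -> (k < n)%nat ->
  0 < L -> -1 <= s <= 1 -> s - 1/100 < slope_grid jn <= s ->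
  (INR w + 1) / INR N <= L ->
  A0 = (Int_part ((M1 + xl) * INR N) + 1)%Z ->
  B0 = (Int_part ((M2 + s * (IZR A0 / INR N - M1) + zb) * INR N) + 1)%Z ->
  in_staircase N w h (Z.to_nat (A0 mod Z.of_nat N))
    (stair_offset N (Z.to_nat (B0 mod Z.of_nat N)) jn)
    (cell_index N (fst (p k))) (cell_index N (snd (p k))) ->
  exists zx zy,
    xl <= fst (p k) + IZR zx - M1 <= xl + (INR w + 1) / INR N /\
    zb - L / 100 - 2 / INR N <= snd (p k) + IZR zy - M2 - s * (fst (p k) + IZR zx - M1)
      <= zb + (INR h + 2) / INR N.
Proof.
  intros HN Hcube Hk HL Hs Hsg Hw HA HB Hin.
  assert (HN0 : 0 < INR N) by (apply lt_0_INR; auto).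
  destruct (Hcube k Hk) as [Hx Hy].
  destruct (cell_index_spec N _ HN Hx) as [Ha Hxa].
  destruct (cell_index_spec N _ HN Hy) as [Hb Hyb].
  destruct (staircase_lift N w h A0 B0 jn _ _ _ _ HN Ha Hb Hxa Hyb Hin)
    as [c [e [zx [zy [Hc [He [Hx' Hy']]]]]]].
  exists zx, zy. unfold Rdiv in *.
  apply (staircase_cell_in_window (/ INR N) L s (slope_grid jn) M1 M2 xl zb _ _ w h c e A0 B0);
    auto using Rinv_0_lt_compat; unfold Rdiv; rewrite Rinv_inv; auto.
Qed.

Lemma Z_to_nat_mod_lt A N : (0 < N)%nat -> (Z.to_nat (A mod Z.of_nat N) < N)%nat.
Proof. intros HN. destruct (Z.mod_pos_bound A (Z.of_nat N)); lia. Qed.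

Lemma staircase_empty_or_occupied n N w h p (A B : Z) jn :
  (0 < N)%nat -> (jn <= 200)%nat ->
  some_staircase_empty n N w h p \/
  exists k, (k < n)%nat /\
    in_staircase N w h (Z.to_nat (A mod Z.of_nat N))
      (stair_offset N (Z.to_nat (B mod Z.of_nat N)) jn)
      (cell_index N (fst (p k))) (cell_index N (snd (p k))).
Proof.
  intros HN Hjn.
  destruct (classic (staircase_empty n N w h p (Z.to_nat (A mod Z.of_nat N))
                       (Z.to_nat (B mod Z.of_nat N)) jn)) as [He|He].
  - left. exists (Z.to_nat (A mod Z.of_nat N)), (Z.to_nat (B mod Z.of_nat N)), jn.
    repeat split; auto using Z_to_nat_mod_lt.
  - right. apply not_all_ex_not in He. destruct He as [k He].
    apply imply_to_and in He. destruct He as [Hk He]. exists k. split; [exact Hk | apply NNPP; exact He].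
Qed.

(* The two staircases are lifted to corners just inside the two windows of
   the edge, so that their cells fall into the windows; if both contained a
   point, those points would span an edge crossing [ij]. *)
Lemma free_edge_staircase_empty n r p i j N w h L :
  (0 < N)%nat -> 0 < L <= 1/100 ->
  (INR w + 1) / INR N <= 46/100 * L -> (INR h + 4) / INR N <= 33/100 * L ->
  in_cube n p -> free_edge n r p i j ->
  let d1 := fst (tdisp (p i) (p j)) in let d2 := snd (tdisp (p i) (p j)) in
  L ^ 2 <= d1 ^ 2 + d2 ^ 2 -> d2 ^ 2 <= d1 ^ 2 ->
  some_staircase_empty n N w h p.
Proof.
  intros HN HL Hw Hh Hcube [Hedge Hfree] d1 d2 HLd Hd21.
  destruct (dominant_coordinate L d1 d2) as [_ [Hs _]]; [lra|auto|auto|].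
  set (s := d2 / d1) in Hs.
  destruct (slope_grid_below s Hs) as [jn [Hjn Hsg]].
  set (M1 := fst (p i) + d1 / 2). set (M2 := snd (p i) + d2 / 2).
  set (al := if Rle_dec 0 s then 34/100 else 12/100).
  set (be := if Rle_dec 0 s then 12/100 else 34/100).
  assert (Hsk : skewed_windows s al be).
  { unfold al, be. destruct (Rle_dec 0 s); [left|right]; repeat split; lra. }
  assert (Hsum : al * L + be * L = 46/100 * L) by (destruct Hsk as [[_ [-> ->]]|[_ [-> ->]]]; lra).
  set (zbU := 1/100 * L + L / 100 + 2 / INR N).
  set (zbD := - 36/100 * L + L / 100 + 2 / INR N).
  set (AU := (Int_part ((M1 + - al * L) * INR N) + 1)%Z).
  set (BU := (Int_part ((M2 + s * (IZR AU / INR N - M1) + zbU) * INR N) + 1)%Z).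
  set (AD := (Int_part ((M1 + - be * L) * INR N) + 1)%Z).
  set (BD := (Int_part ((M2 + s * (IZR AD / INR N - M1) + zbD) * INR N) + 1)%Z).
  assert (Hwl : (INR w + 1) / INR N <= L) by lra.
  destruct (staircase_empty_or_occupied n N w h p AU BU jn HN Hjn) as [|[k [Hk HkU]]]; auto.
  destruct (staircase_empty_or_occupied n N w h p AD BD jn HN Hjn) as [|[l [Hl HlD]]]; auto.
  exfalso. apply Hfree.
  destruct (staircase_point_in_window n N w h p k AU BU jn L s M1 M2 (- al * L) zbU
     HN Hcube Hk ltac:(lra) Hs Hsg Hwl eq_refl eq_refl HkU) as [z1x [z1y [HX1 HZ1]]].
  destruct (staircase_point_in_window n N w h p l AD BD jn L s M1 M2 (- be * L) zbD
     HN Hcube Hl ltac:(lra) Hs Hsg Hwl eq_refl eq_refl HlD) as [z2x [z2y [HX2 HZ2]]].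
  assert (HN0 : 0 < INR N) by (apply lt_0_INR; auto).
  assert (HNpos : 0 < 2 / INR N) by (apply Rdiv_lt_0_compat; lra).
  assert (Hh' : (INR h + 2) / INR N + 2 / INR N = (INR h + 4) / INR N) by (field; lra).
  apply (crossed_of_window_points n r p i j k l z1x z1y z2x z2y L al be
           Hedge Hk Hl HL HLd Hd21 Hsk);
    fold d1 d2 s M1 M2; unfold zbU, zbD in *; lra.
Qed.

Lemma bad_event_staircase_empty n r p N w h L :
  (0 < N)%nat -> 0 < L <= 1/100 ->
  (INR w + 1) / INR N <= 46/100 * L -> (INR h + 4) / INR N <= 33/100 * L ->
  L <= sqrt (8 * ln (INR n) / INR n) ->
  in_cube n p -> bad_event n r p ->
  some_staircase_empty n N w h p \/ some_staircase_empty n N w h (swap_config p).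
Proof.
  intros HN HL Hw Hh HLlong Hc [i [j [Hf Hlong]]].
  assert (HT : L <= tdist (p i) (p j)) by (unfold is_long in Hlong; lra).
  unfold tdist in HT.
  set (d1 := fst (tdisp (p i) (p j))) in *. set (d2 := snd (tdisp (p i) (p j))) in *.
  assert (HL2 : L ^ 2 <= d1 ^ 2 + d2 ^ 2).
  { pose proof (sqrt_sqrt (d1 * d1 + d2 * d2) ltac:(nra)).
    pose proof (sqrt_pos (d1 * d1 + d2 * d2)). simpl. nra. }
  destruct (Rle_or_lt (d2 ^ 2) (d1 ^ 2)).
  - left. eapply free_edge_staircase_empty; eauto.
  - right.
    apply (free_edge_staircase_empty n r (swap_config p) i j N w h L HN HL Hw Hh
             (in_cube_swap n p Hc) (free_edge_swap n r p i j Hf));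
      unfold swap_config; rewrite tdisp_swap; cbn [fst snd swap_pt]; fold d1 d2; lra.
Qed.

(** * Counting staircases *)

(* Triples (corner column, corner row, slope index). *)
Definition staircases (N : nat) : list (nat * nat * nat) :=
  flat_map (fun a0 => flat_map (fun b0 => map (fun jn => (a0, b0, jn)) (seq 0 201))
                               (seq 0 N)) (seq 0 N).

Definition staircase_empty_boxes (n N w h : nat) : list box :=
  flat_map (fun '(a0, b0, jn) => product_boxes n (cells_off_staircase N w h a0 (stair_offset N b0 jn)))
           (staircases N).

Lemma staircases_length N : length (staircases N) = (N * (N * 201))%nat.
Proof.
  unfold staircases. rewrite (length_flat_map_const _ _ (N * 201)); [rewrite length_seq; auto|].
  intros x _. rewrite (length_flat_map_const _ _ 201); [rewrite length_seq; auto|].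
  intros y _. rewrite length_map, length_seq. auto.
Qed.

Lemma in_staircases N a0 b0 jn : (a0 < N)%nat -> (b0 < N)%nat -> (jn <= 200)%nat ->
  In (a0, b0, jn) (staircases N).
Proof.
  intros. apply in_flat_map. exists a0. split; [apply in_seq; lia|].
  apply in_flat_map. exists b0. split; [apply in_seq; lia|].
  apply in_map, in_seq. lia.
Qed.

Lemma staircase_empty_boxes_vol n N w h : (0 < N)%nat -> (w <= N)%nat -> (h <= N)%nat ->
  boxes_vol n (staircase_empty_boxes n N w h)
  = INR (N * (N * 201)) * (1 - INR w * INR h / (INR N * INR N)) ^ n.
Proof.
  intros HN Hw Hh. unfold staircase_empty_boxes.
  rewrite (boxes_vol_flat_map_const _ _ _ ((1 - INR w * INR h / (INR N * INR N)) ^ n)).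
  - rewrite staircases_length. auto.
  - intros [[a0 b0] jn] _. rewrite boxes_vol_product, cells_off_staircase_area; auto.
Qed.

Lemma staircase_empty_boxes_ok n N w h : (0 < N)%nat ->
  Forall (box_ok n) (staircase_empty_boxes n N w h).
Proof.
  intros HN. apply Forall_forall. intros b Hb. apply in_flat_map in Hb.
  destruct Hb as [[[a0 b0] jn] [_ Hb]].
  pose proof (product_boxes_ok n _ (cells_off_staircase_ok N w h a0 (stair_offset N b0 jn) HN)) as H.
  rewrite Forall_forall in H. auto.
Qed.

Lemma staircase_empty_boxes_cover n N w h p : (0 < N)%nat -> in_cube n p ->
  some_staircase_empty n N w h p ->
  exists b, In b (staircase_empty_boxes n N w h) /\ in_box n b p.
Proof.
  intros HN Hc [a0 [b0 [jn [Ha0 [Hb0 [Hjn He]]]]]].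
  destruct (product_boxes_cover n (cells_off_staircase N w h a0 (stair_offset N b0 jn)) p)
    as [b [Hb Hpb]].
  - intros k Hk. destruct (Hc k Hk).
    apply cells_off_staircase_cover; auto. intros c; apply stair_offset_lt; auto.
  - exists b. split; auto. apply in_flat_map. exists (a0, b0, jn).
    split; auto. apply in_staircases; auto.
Qed.

(* The coordinate swap covers the configurations whose long edge is steep. *)
Lemma outer_le_staircase_empty n N w h (S : config -> Prop) :
  (0 < n)%nat -> (0 < N)%nat -> (w <= N)%nat -> (h <= N)%nat ->
  (forall p, S p -> in_cube n p /\
     (some_staircase_empty n N w h p \/ some_staircase_empty n N w h (swap_config p))) ->
  outer_le n S (2 * (INR (N * (N * 201)) * (1 - INR w * INR h / (INR N * INR N)) ^ n)).
Proof.
  intros Hn HN Hw Hh HS.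
  set (l := staircase_empty_boxes n N w h).
  apply (outer_le_of_boxes n S (l ++ map swap_box l)); auto.
  - apply Forall_app. split; [apply staircase_empty_boxes_ok; auto|].
    apply Forall_map. pose proof (staircase_empty_boxes_ok n N w h HN) as Hok.
    rewrite Forall_forall in *. intros; apply swap_box_ok; auto.
  - intros p Hp. destruct (HS p Hp) as [Hc [He|He]].
    + destruct (staircase_empty_boxes_cover n N w h p HN Hc He) as [b [Hb Hpb]].
      exists b. split; auto. apply in_or_app; auto.
    + destruct (staircase_empty_boxes_cover n N w h (swap_config p) HN (in_cube_swap n p Hc) He)
        as [b [Hb Hpb]].
      exists (swap_box b). split; [apply in_or_app; right; apply in_map; auto|].
      apply in_box_swap; auto.
  - unfold l. rewrite boxes_vol_app, boxes_vol_swap, staircase_empty_boxes_vol by auto. lra.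
Qed.

(** * Choice of the grid and the union bound *)

(* For the side [L] of the windows, the grid has mesh about [L/200] and the
   staircases are about [0.46 L] wide and [0.33 L] high. *)
Definition grid_size (L : R) : nat := Z.to_nat (up (200 / L)).

Definition stair_width (L : R) : nat :=
  Z.to_nat (Int_part (46/100 * L * INR (grid_size L)) - 1).

Definition stair_height (L : R) : nat :=
  Z.to_nat (Int_part (33/100 * L * INR (grid_size L)) - 4).

Lemma grid_size_bounds L : 0 < L <= 1/100 ->
  (0 < grid_size L)%nat /\ 200 < L * INR (grid_size L) <= 201.
Proof.
  intros HL. destruct (archimed (200 / L)) as [Hu1 Hu2].
  assert (H200 : 200 < 200 / L).
  { apply (Rmult_lt_reg_r L); [lra|]. unfold Rdiv. rewrite Rmult_assoc, Rinv_l; nra. }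
  assert (HN : INR (grid_size L) = IZR (up (200 / L))).
  { unfold grid_size. rewrite INR_IZR_INZ, Z2Nat.id; auto.
    apply le_IZR. simpl. lra. }
  rewrite HN. split; [apply INR_lt; simpl; lra|].
  replace (200 / L) with (200 * / L) in * by reflexivity.
  assert (L * (200 * / L) = 200) by (field; lra). split; nra.
Qed.

Lemma staircase_fits L : 0 < L <= 1/100 ->
  let N := grid_size L in let w := stair_width L in let h := stair_height L in
  (INR w + 1) / INR N <= 46/100 * L /\ (INR h + 4) / INR N <= 33/100 * L /\
  (w <= N)%nat /\ (h <= N)%nat /\
  137/1000 * (L * L) <= INR w * INR h / (INR N * INR N).
Proof.
  intros HL N w h.
  destruct (grid_size_bounds L HL) as [HN [HLN1 HLN2]]. fold N in HN, HLN1, HLN2.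
  set (Nr := INR N) in *.
  assert (HNr : 0 < Nr) by (apply lt_0_INR; auto).
  destruct (Int_part_bounds (46/100 * L * Nr)) as [Hq1 Hq2].
  destruct (Int_part_bounds (33/100 * L * Nr)) as [Hr1 Hr2].
  set (q := Int_part (46/100 * L * Nr)) in *. set (q' := Int_part (33/100 * L * Nr)) in *.
  assert (Hw : INR w = IZR q - 1).
  { assert (91 <= q)%Z by (apply le_IZR; simpl; lra).
    unfold w, stair_width. fold N Nr q. rewrite INR_IZR_INZ, Z2Nat.id, minus_IZR by lia. auto. }
  assert (Hh : INR h = IZR q' - 4).
  { assert (65 <= q')%Z by (apply le_IZR; simpl; lra).
    unfold h, stair_height. fold N Nr q'. rewrite INR_IZR_INZ, Z2Nat.id, minus_IZR by lia. auto. }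
  split; [|split; [|split; [|split]]].
  - apply (Rmult_le_reg_r Nr); auto. unfold Rdiv. rewrite Rmult_assoc, Rinv_l; lra.
  - apply (Rmult_le_reg_r Nr); auto. unfold Rdiv. rewrite Rmult_assoc, Rinv_l; lra.
  - apply INR_le. fold Nr. nra.
  - apply INR_le. fold Nr. nra.
  - apply (Rmult_le_reg_r (Nr * Nr)); [nra|].
    replace (INR w * INR h / (Nr * Nr) * (Nr * Nr)) with (INR w * INR h) by (field; lra).
    rewrite Hw, Hh. nra.
Qed.

Lemma ln_le_sqrt x : 0 < x -> ln x <= 2 * sqrt x.
Proof.
  intros H. assert (Hs : 0 < sqrt x) by (apply sqrt_lt_R0; auto).
  rewrite <- (sqrt_sqrt x) at 1 by lra. rewrite ln_mult by auto.
  pose proof (exp_ineq1_le (ln (sqrt x))). rewrite exp_ln in H0 by auto. lra.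
Qed.

Lemma exp_le_compat x y : x <= y -> exp x <= exp y.
Proof. intros [H | ->]; [left; apply exp_increasing; auto | right; reflexivity]. Qed.

Lemma pow_one_minus_le_exp x n : 0 <= x <= 1 -> (1 - x) ^ n <= exp (- (INR n * x)).
Proof.
  intros Hx. induction n as [|n IH].
  - simpl. rewrite Rmult_0_l, Ropp_0, exp_0. lra.
  - rewrite S_INR. replace (- ((INR n + 1) * x)) with (- (INR n * x) + - x) by ring.
    rewrite exp_plus. simpl. rewrite Rmult_comm.
    apply Rmult_le_compat; [apply pow_le; lra | lra | exact IH |].
    pose proof (exp_ineq1_le (- x)). lra.
Qed.

Definition union_const : R := 2100000.

Lemma union_const_decay n eps : 0 < eps -> 0 < INR n ->
  (ln union_const - ln eps) / (96/1000) <= ln (INR n) ->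
  union_const * (exp (- (1096/1000 * ln (INR n))) * INR n) <= eps.
Proof.
  intros Heps Hn HT.
  assert (HC : 0 < union_const) by (unfold union_const; lra).
  assert (Hlog : ln union_const - ln eps <= 96/1000 * ln (INR n)).
  { apply (Rmult_le_compat_r (96/1000)) in HT; [|lra].
    unfold Rdiv in HT. rewrite Rmult_assoc, Rinv_l, Rmult_1_r in HT; lra. }
  assert (Hpow : exp (- (1096/1000 * ln (INR n))) * INR n = exp (- (96/1000 * ln (INR n)))).
  { rewrite <- (exp_ln (INR n)) at 2 by lra. rewrite <- exp_plus. f_equal. field. }
  rewrite Hpow.
  apply Rle_trans with (union_const * exp (ln eps - ln union_const)).
  - apply Rmult_le_compat_l; [lra|]. apply exp_le_compat. lra.
  - unfold Rminus. rewrite exp_plus, exp_Ropp, !exp_ln by lra. right; field; lra.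
Qed.

Lemma grid_size_sqr_le n L :
  0 < INR n -> 1 <= ln (INR n) -> L * L = 8 * ln (INR n) / INR n -> 0 < L <= 1/100 ->
  INR (grid_size L) * INR (grid_size L) <= 201 * 201 / 8 * INR n.
Proof.
  intros Hn Hln HL2 HL.
  destruct (grid_size_bounds L HL) as [HN [HLN1 HLN2]].
  set (Nr := INR (grid_size L)) in *.
  assert (HL8 : 8 / INR n <= L * L).
  { rewrite HL2. unfold Rdiv. apply Rmult_le_compat_r; [left; apply Rinv_0_lt_compat|]; lra. }
  assert (Hsq : Nr * Nr * (8 / INR n) <= 201 * 201).
  { apply Rle_trans with (Nr * Nr * (L * L)); [apply Rmult_le_compat_l; nra | nra]. }
  apply (Rmult_le_reg_r (8 / INR n)); [apply Rdiv_lt_0_compat; lra|].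
  replace (201 * 201 / 8 * INR n * (8 / INR n)) with (201 * 201) by (field; lra). lra.
Qed.

(* With [L^2 = 8 ln n / n] a given staircase is empty with probability at
   most [exp (- 0.137 * 8 ln n) = n^-1.096]. *)
Lemma staircase_miss_le n L :
  0 < INR n -> L * L = 8 * ln (INR n) / INR n -> 0 < L <= 1/100 ->
  let N := grid_size L in
  let x := INR (stair_width L) * INR (stair_height L) / (INR N * INR N) in
  0 <= 1 - x /\ (1 - x) ^ n <= exp (- (1096/1000 * ln (INR n))).
Proof.
  intros Hn HL2 HL N x.
  destruct (grid_size_bounds L HL) as [HN _]. fold N in HN.
  destruct (staircase_fits L HL) as [_ [_ [Hw [Hh Hx1]]]]. fold N x in Hw, Hh, Hx1.
  apply le_INR in Hw, Hh.
  assert (HNr : 0 < INR N) by (apply lt_0_INR; auto).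
  assert (Hx2 : x <= 1).
  { unfold x. apply (Rmult_le_reg_r (INR N * INR N)); [nra|].
    replace (INR (stair_width L) * INR (stair_height L) / (INR N * INR N) * (INR N * INR N))
      with (INR (stair_width L) * INR (stair_height L)) by (field; lra).
    pose proof (pos_INR (stair_width L)). pose proof (pos_INR (stair_height L)). nra. }
  split; [lra|].
  apply Rle_trans with (exp (- (INR n * x))); [apply pow_one_minus_le_exp; nra|].
  apply exp_le_compat. rewrite HL2 in Hx1.
  apply (Rmult_le_compat_l (INR n)) in Hx1; [|lra].
  replace (INR n * (137 / 1000 * (8 * ln (INR n) / INR n))) with (1096/1000 * ln (INR n))
    in Hx1 by (field; lra). lra.
Qed.

Lemma staircase_union_bound n L eps :
  0 < eps -> 0 < INR n -> 1 <= ln (INR n) ->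
  L * L = 8 * ln (INR n) / INR n -> 0 < L <= 1/100 ->
  (ln union_const - ln eps) / (96/1000) <= ln (INR n) ->
  let N := grid_size L in
  2 * (INR (N * (N * 201)) *
       (1 - INR (stair_width L) * INR (stair_height L) / (INR N * INR N)) ^ n) <= eps.
Proof.
  intros Heps Hn Hln HL2 HL HT N.
  pose proof (grid_size_sqr_le n L Hn Hln HL2 HL) as HNN. fold N in HNN.
  destruct (staircase_miss_le n L Hn HL2 HL) as [Hx Hmiss]. fold N in Hx, Hmiss.
  set (x := INR (stair_width L) * INR (stair_height L) / (INR N * INR N)) in *.
  set (E := exp (- (1096/1000 * ln (INR n)))) in *.
  assert (Hprod : INR N * INR N * (1 - x) ^ n <= 201 * 201 / 8 * INR n * E).
  { apply Rmult_le_compat; [nra | apply pow_le; lra | exact HNN | exact Hmiss]. }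
  apply Rle_trans with (union_const * (E * INR n)); [|apply union_const_decay; auto].
  rewrite !mult_INR. replace (INR 201) with 201 by (simpl; ring).
  assert (0 <= E * INR n) by (apply Rmult_le_pos; [left; apply exp_pos | lra]).
  replace (2 * (INR N * (INR N * 201) * (1 - x) ^ n))
    with (402 * (INR N * INR N * (1 - x) ^ n)) by ring.
  apply Rle_trans with (402 * (201 * 201 / 8) * (E * INR n)).
  - replace (402 * (201 * 201 / 8) * (E * INR n)) with (402 * (201 * 201 / 8 * INR n * E))
      by ring. apply Rmult_le_compat_l; [lra | exact Hprod].
  - unfold union_const. apply Rmult_le_compat_r; lra.
Qed.

Lemma ln_over_small x : 160000 * 160000 <= x -> 8 * ln x / x <= / 10000.
Proof.
  intros Hx.
  assert (Hs : 160000 <= sqrt x).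
  { rewrite <- (sqrt_square 160000) by lra. apply sqrt_le_1_alt. lra. }
  pose proof (ln_le_sqrt x ltac:(lra)) as Hln.
  pose proof (sqrt_sqrt x ltac:(lra)) as Hss.
  apply (Rmult_le_reg_r x); [lra|].
  replace (8 * ln x / x * x) with (8 * ln x) by (field; lra).
  set (sq := sqrt x) in *. nra.
Qed.

Lemma eventually_large T : exists N0, forall n, (N0 <= n)%nat ->
  4 <= INR n /\ 8 * ln (INR n) / INR n <= / 10000 /\ T <= ln (INR n).
Proof.
  set (B := Rmax (exp T) (160000 * 160000)).
  destruct (archimed B) as [Hu _].
  assert (HB1 : exp T <= B) by apply Rmax_l.
  assert (HB2 : 160000 * 160000 <= B) by apply Rmax_r.
  exists (Z.to_nat (up B)). intros n Hn.
  apply le_INR in Hn. rewrite INR_IZR_INZ, Z2Nat.id in Hn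
    by (apply le_IZR; simpl; lra).
  split; [lra|split; [apply ln_over_small; lra|]].
  rewrite <- (ln_exp T). left. apply ln_increasing; [apply exp_pos | lra].
Qed.

Lemma long_threshold_facts n : 4 <= INR n -> 8 * ln (INR n) / INR n <= / 10000 ->
  let L := sqrt (8 * ln (INR n) / INR n) in
  1 <= ln (INR n) /\ L * L = 8 * ln (INR n) / INR n /\ 0 < L <= 1/100.
Proof.
  intros Hn Hsmall L.
  assert (Hln : 1 <= ln (INR n)).
  { rewrite <- ln_exp at 1. left. apply ln_increasing; [apply exp_pos|].
    pose proof exp_le_3. lra. }
  assert (Hpos : 0 < 8 * ln (INR n) / INR n) by (apply Rdiv_lt_0_compat; lra).
  assert (HL2 : L * L = 8 * ln (INR n) / INR n) by (apply sqrt_sqrt; lra).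
  assert (HL : 0 < L) by (apply sqrt_lt_R0; auto).
  repeat split; auto; nra.
Qed.

Theorem lemma3 (r : nat -> R) :
  prob_tends_to_0 (fun n p => bad_event n (r n) p).
Proof.
  intros eps Heps.
  destruct (eventually_large ((ln union_const - ln eps) / (96/1000))) as [N0 HN0].
  exists N0. intros n Hn. destruct (HN0 n Hn) as [Hn4 [Hsmall HT]].
  destruct (long_threshold_facts n Hn4 Hsmall) as [Hln [HL2 HL]].
  set (L := sqrt (8 * ln (INR n) / INR n)) in *.
  destruct (grid_size_bounds L HL) as [HN _].
  destruct (staircase_fits L HL) as [Hw [Hh [Hwn [Hhn _]]]].
  eapply outer_le_weaken; [apply (staircase_union_bound n L eps); auto; lra|].
  apply outer_le_staircase_empty; auto.
  - apply INR_lt. simpl. lra.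
  - intros p [Hc Hbad]. split; auto.
    apply (bad_event_staircase_empty n (r n) p _ _ _ L); auto. apply Rle_refl.
Qed.
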